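(* For all $P,Q\in\Gamma_n$ ($n\ge2$), $$M_{SA}(P\|Q)\le \tfrac13 M_{SH}(P\|Q)\le \tfrac14\Delta(P\|Q)\le \tfrac12 M_{SG}(P\|Q)\le h(P\|Q),$$ and $$\xi_{SA}(P\|Q)\le \tfrac13\xi_{SH}(P\|Q)\le \tfrac14\xi_{\Delta}(P\|Q)\le \tfrac12\xi_{SG}(P\|Q)\le \xi_h(P\|Q).$$
   Context: $\Gamma_n=\{P=(p_1,\dots,p_n): p_i>0,\ \sum_i p_i=1\}$. For $f:(0,\infty)\to\mathbb{R}$, $C_f(P\|Q)=\sum_{i=1}^n q_i f(p_i/q_i)$; for differentiable $f$, $E_f(P\|Q)=\sum_{i=1}^n (p_i-q_i) f'(p_i/q_i)$ and $\xi_f(P\|Q)=E_f(P\|Q)-C_f(P\|Q)$. Define on $(0,\infty)$: $f_{SA}(x)=\sqrt{(x^2+1)/2}-\frac{x+1}{2}$, $f_{SG}(x)=\sqrt{(x^2+1)/2}-\sqrt{x}$, $f_{SH}(x)=\sqrt{(x^2+1)/2}-\frac{2x}{x+1}$, $f_h(x)=\frac12(\sqrt x-1)^2$, $f_\Delta(x)=\frac{(x-1)^2}{x+1}$. Then $M_{SA}=C_{f_{SA}}=\sum_i\sqrt{(p_i^2+q_i^2)/2}-1$, $M_{SG}=C_{f_{SG}}=\sum_i\big(\sqrt{(p_i^2+q_i^2)/2}-\sqrt{p_iq_i}\big)$, $M_{SH}=C_{f_{SH}}=\sum_i\big(\sqrt{(p_i^2+q_i^2)/2}-\frac{2p_iq_i}{p_i+q_i}\big)$,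 $h=C_{f_h}=\frac12\sum_i(\sqrt{p_i}-\sqrt{q_i})^2$, $\Delta=C_{f_\Delta}=\sum_i\frac{(p_i-q_i)^2}{p_i+q_i}$; and $\xi_{SA}=\xi_{f_{SA}}$, $\xi_{SG}=\xi_{f_{SG}}$, $\xi_{SH}=\xi_{f_{SH}}$, $\xi_h=\xi_{f_h}$, $\xi_\Delta=\xi_{f_\Delta}$. *)

From HB Require Import structures.
From mathcomp Require Import all_boot all_order all_algebra.
From mathcomp Require Import all_classical all_reals all_analysis.
Set Implicit Arguments. Unset Strict Implicit. Unset Printing Implicit Defensive.
Import Order.TTheory GRing.Theory Num.Theory.
Import numFieldNormedType.Exports.
Local Open Scope ring_scope.

Section Divergences.
Variable R : realType.

Definition Gamma (n : nat) (P : 'I_n -> R) : Prop :=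
  (forall i, 0 < P i) /\ \sum_(i < n) P i = 1.

Definition Cf (n : nat) (f : R -> R) (P Q : 'I_n -> R) : R :=
  \sum_(i < n) Q i * f (P i / Q i).

Definition Ef (n : nat) (f : R -> R) (P Q : 'I_n -> R) : R :=
  \sum_(i < n) (P i - Q i) * derive1 f (P i / Q i).

Definition xif (n : nat) (f : R -> R) (P Q : 'I_n -> R) : R :=
  Ef f P Q - Cf f P Q.

Definition f_SA (x : R) : R := Num.sqrt ((x ^+ 2 + 1) / 2) - (x + 1) / 2.
Definition f_SG (x : R) : R := Num.sqrt ((x ^+ 2 + 1) / 2) - Num.sqrt x.
Definition f_SH (x : R) : R := Num.sqrt ((x ^+ 2 + 1) / 2) - 2 * x / (x + 1).
Definition f_h (x : R) : R := (Num.sqrt x - 1) ^+ 2 / 2.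
Definition f_Delta (x : R) : R := (x - 1) ^+ 2 / (x + 1).

End Divergences.

From mathcomp Require Import all_boot all_order all_algebra.
From mathcomp Require Import all_classical all_reals all_analysis.
From mathcomp Require Import ring lra.
Import Order.TTheory GRing.Theory Num.Theory.
Import numFieldNormedType.Exports.
Set Implicit Arguments. Unset Strict Implicit. Unset Printing Implicit Defensive.
Local Open Scope ring_scope.

(* Both C_f and xi_f are Q-weighted sums of a function of x = p/q, namely f itself and
   (x - 1) f'(x) - f(x), so it suffices to compare these functions for x > 0 (only the
   positivity of P and Q is used).  With A, G, H, S the arithmetic, geometric, harmonic
   and quadratic means of x and 1, the five divergence generators are S - A, S - H,
   2(A - H), S - G and A - G.  Since H = G^2/A, after dividing by A everything is a
   function of a = S/A and b = G/A, which satisfy a^2 + b^2 = 2 and 0 < b <= 1; on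
   this arc both chains reduce to polynomial inequalities, proved by squaring. *)

Definition chain342 (R : numFieldType) (u v w y z : R) : Prop :=
  u <= v / 3 /\ v / 3 <= w / 4 /\ w / 4 <= y / 2 /\ y / 2 <= z.

Lemma chain342_scale (R : numFieldType) (k u v w y z : R) : 0 <= k ->
  chain342 u v w y z -> chain342 (k * u) (k * v) (k * w) (k * y) (k * z).
Proof.
move=> k_ge0 [uv [vw [wy yz]]].
by rewrite /chain342 -!mulrA !ler_wpM2l.
Qed.

Section CircleArc.
Variable R : realFieldType.

Lemma chain342_circle (a b : R) : 0 < a -> 0 < b -> b <= 1 -> a ^+ 2 + b ^+ 2 = 2 ->
  chain342 (a - 1) (a - b ^+ 2) (2 * (1 - b ^+ 2)) (a - b) (1 - b).
Proof.
move=> a_gt0 b_gt0 b_le1 /(canRL (addrK _)) a_sqr.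
have a_le : 2 * a <= 3 - b ^+ 2.
  rewrite -ler_sqr ?nnegrE; [|lra|nra].
  rewrite -subr_ge0 (_ : _ - _ = (1 - b ^+ 2) ^+ 2) ?sqr_ge0 //.
  by rewrite exprMn a_sqr; ring.
have a_ge : 1 - b ^+ 2 + b <= a.
  rewrite -ler_sqr ?nnegrE; [|nra|lra].
  rewrite -subr_ge0 (_ : _ - _ = (1 - b) ^+ 3 * (1 + b)).
    by rewrite mulr_ge0 ?exprn_ge0 //; lra.
  by rewrite a_sqr; ring.
have ab_le : a + b <= 2.
  by rewrite -ler_sqr ?nnegrE; [have := sqr_ge0 (a - b); nra | lra | lra].
by rewrite /chain342; lra.
Qed.

Lemma chain342_circle_xi (a b : R) : 0 < a -> 0 < b -> b <= 1 -> a ^+ 2 + b ^+ 2 = 2 ->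
  chain342 (1 - a^-1) (a ^+ 2 - a^-1) (2 * (a ^+ 2 - 1)) (b^-1 - a^-1) (b^-1 - 1).
Proof.
move=> a_gt0 b_gt0 b_le1 /(canRL (addrK _)) a_sqr.
have a_cube : 0 <= a ^+ 3 - 3 * a + 2.
  rewrite (_ : _ - _ + _ = (a - 1) ^+ 2 * (a + 2)); last by ring.
  by rewrite mulr_ge0 ?sqr_ge0 //; lra.
have b_le : b <= a * (1 - b + b ^+ 3).
  have b_cube := exprn_ge0 3 (ltW b_gt0).
  rewrite -ler_sqr ?nnegrE; [|lra|apply: mulr_ge0; lra].
  rewrite -subr_ge0 (_ : _ - _ = (1 - b) ^+ 3 * (b ^+ 5 + 3 * b ^+ 4 + 2 * b ^+ 3 + 2 * b + 2)).
    by rewrite mulr_ge0 ?exprn_ge0 //; [lra|nra].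
  by rewrite exprMn a_sqr; ring.
have ab_le : 2 * a * b <= a + b.
  have : 2 * a * b = (a + b) ^+ 2 - 2 by rewrite sqrrD a_sqr; ring.
  have : a + b <= 2 by rewrite -ler_sqr ?nnegrE; [have := sqr_ge0 (a - b); nra | lra | lra].
  nra.
have a0 : a != 0 by rewrite gt_eqF.
have b0 : b != 0 by rewrite gt_eqF.
split; [|split; [|split]]; rewrite -subr_ge0.
- rewrite (_ : _ - _ = (a ^+ 3 - 3 * a + 2) / (3 * a)); last by field.
  by rewrite divr_ge0 //; lra.
- rewrite (_ : _ - _ = (a ^+ 3 - 3 * a + 2) / (6 * a)); last by field.
  by rewrite divr_ge0 //; lra.
- rewrite (_ : _ - _ = (a - b - (a ^+ 2 - 1) * a * b) / (2 * a * b));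
    last by field; rewrite a0 b0.
  by apply: divr_ge0; [rewrite a_sqr; lra | nra].
- rewrite (_ : _ - _ = (a + b - 2 * a * b) / (2 * a * b)); last by field; rewrite a0 b0.
  by apply: divr_ge0; [lra | nra].
Qed.

End CircleArc.

Section MeanDifferences.
Variable R : realType.
Implicit Types (x y : R) (f g : R -> R).

Definition amean x := (x + 1) / 2.
Definition hmean x := 2 * x / (x + 1).
Definition qmean x := Num.sqrt ((x ^+ 2 + 1) / 2).

Lemma is_derive_amean x : is_derive x 1 amean 2^-1.
Proof.
rewrite (_ : amean = (id + cst 1) * cst 2^-1); last by apply/funext.
have d1 := is_deriveD (@is_derive_id _ _ x 1) (is_derive_cst (1 : R) x 1).
apply: is_derive_eq (is_deriveM d1 (is_derive_cst (2^-1 : R) x 1)) _.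
by rewrite /GRing.scale /=; ring.
Qed.

Lemma is_derive_hmean x : x + 1 != 0 -> is_derive x 1 hmean (2 / (x + 1) ^+ 2).
Proof.
move=> x1_neq0.
rewrite (_ : hmean = (2 *: id) * (fun y => (shift 1 y)^-1)); last by apply/funext.
have dinv := is_deriveV (f := shift 1) x1_neq0 (is_derive_shift x 1 1).
apply: is_derive_eq (is_deriveM (is_deriveZ (2 : R) (@is_derive_id _ _ x 1)) dinv) _.
by rewrite /GRing.scale /= ?/GRing.scale /=; field.
Qed.

Lemma is_derive_qmean x : is_derive x 1 qmean (x / (2 * qmean x)).
Proof.
have dmean : is_derive x 1 (fun y => (y ^+ 2 + 1) / 2) x.
  rewrite (_ : (fun y => _) = (id ^+ 2 + cst 1) * cst 2^-1); last by apply/funext.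
  have d1 := is_deriveD (is_deriveX 2 (@is_derive_id _ _ x 1)) (is_derive_cst (1 : R) x 1).
  apply: is_derive_eq (is_deriveM d1 (is_derive_cst (2^-1 : R) x 1)) _.
  by rewrite /GRing.scale /=; field.
have mean_gt0 : 0 < (x ^+ 2 + 1) / 2 by rewrite divr_gt0 // ltr_pwDr // sqr_ge0.
apply: is_derive_eq (is_derive1_comp (g := fun y => (y ^+ 2 + 1) / 2)
  (is_derive1_sqrt mean_gt0) dmean) _.
by rewrite mulrC.
Qed.

Lemma amean_gt0 x : 0 < x -> 0 < amean x.
Proof. by move=> x_gt0; rewrite divr_gt0 // ltr_wpDl // ltW. Qed.

Lemma qmean_gt0 x : 0 < qmean x.
Proof. by rewrite sqrtr_gt0 divr_gt0 // ltr_pwDr // sqr_ge0. Qed.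

Lemma sqr_qmean x : qmean x ^+ 2 = (x ^+ 2 + 1) / 2.
Proof. by rewrite sqr_sqrtr // divr_ge0 // addr_ge0 // sqr_ge0. Qed.

Lemma hmean_sqrt x : 0 <= x -> hmean x = Num.sqrt x ^+ 2 / amean x.
Proof.
move=> x_ge0; have x1_neq0 : x + 1 != 0 by rewrite gt_eqF // ltr_pwDr.
by rewrite sqr_sqrtr // /hmean /amean; field.
Qed.

Lemma f_h_means x : 0 <= x -> f_h x = amean x - Num.sqrt x.
Proof.
move=> x_ge0; rewrite /f_h /amean.
by have := sqr_sqrtr x_ge0; move: (Num.sqrt x) => t <-; field.
Qed.

Lemma f_Delta_means x : 0 < x -> f_Delta x = 2 * (amean x - hmean x).
Proof.
move=> x_gt0; have x1_neq0 : x + 1 != 0 by rewrite gt_eqF // ltr_wpDl // ltW.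
by rewrite /f_Delta /amean /hmean; field.
Qed.

Lemma circle_normalized_means x : 0 < x ->
  [/\ 0 < qmean x / amean x, 0 < Num.sqrt x / amean x, Num.sqrt x / amean x <= 1 &
      (qmean x / amean x) ^+ 2 + (Num.sqrt x / amean x) ^+ 2 = 2].
Proof.
move=> x_gt0; have k_gt0 := amean_gt0 x_gt0.
split; first exact: divr_gt0 (qmean_gt0 x) k_gt0.
- by rewrite divr_gt0 // sqrtr_gt0.
- by rewrite ler_pdivrMr // mul1r -subr_ge0 -(f_h_means (ltW x_gt0)) divr_ge0 ?sqr_ge0.
- have x1_neq0 : x + 1 != 0 by rewrite gt_eqF // ltr_wpDl // ltW.
  by rewrite !expr_div_n sqr_qmean (sqr_sqrtr (ltW x_gt0)) /amean; field.
Qed.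

Definition xi_gen f x := (x - 1) * derive1 f x - f x.

Lemma xif_Cf n f (P Q : 'I_n -> R) : (forall i, Q i != 0) -> xif f P Q = Cf (xi_gen f) P Q.
Proof.
move=> Q_neq0; rewrite /xif /Ef /Cf -sumrB; apply: eq_bigr => i _; rewrite /xi_gen.
by move: (derive1 f _) (f _) => df fx; field.
Qed.

Lemma xi_gen_is_derive f x df : is_derive x 1 f df -> xi_gen f x = (x - 1) * df - f x.
Proof. by move=> fdf; rewrite /xi_gen derive1E derive_val. Qed.

Lemma xi_genB f g x df dg : is_derive x 1 f df -> is_derive x 1 g dg ->
  xi_gen (f - g) x = xi_gen f x - xi_gen g x.
Proof.
move=> fdf gdg; rewrite (xi_gen_is_derive (is_deriveB fdf gdg)).
by rewrite (xi_gen_is_derive fdf) (xi_gen_is_derive gdg) !fctE; ring.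
Qed.

Lemma xi_genZ k f x df : is_derive x 1 f df -> xi_gen (k *: f) x = k * xi_gen f x.
Proof.
move=> fdf; rewrite (xi_gen_is_derive (is_deriveZ k fdf)) (xi_gen_is_derive fdf) /=.
by rewrite /GRing.scale /=; ring.
Qed.

Lemma eq_xi_gen_pos f g x : (forall y, 0 < y -> f y = g y) -> 0 < x ->
  xi_gen f x = xi_gen g x.
Proof.
move=> fg x_gt0; have near_fg : \forall y \near x, f y = g y.
  by apply: filterS (lt_nbhsr x_gt0) => y; exact: fg.
by rewrite /xi_gen !derive1E (near_eq_derive _ near_fg) fg.
Qed.

Lemma xi_gen_amean x : xi_gen amean x = -1.
Proof. by rewrite (xi_gen_is_derive (is_derive_amean x)) /amean; field. Qed.

Lemma xi_gen_qmean x : xi_gen qmean x = - (qmean x / amean x)^-1.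
Proof.
rewrite (xi_gen_is_derive (is_derive_qmean x)) invf_div /amean.
have s_neq0 : qmean x != 0 by rewrite gt_eqF ?qmean_gt0.
have -> : (x - 1) * (x / (2 * qmean x)) - qmean x =
    ((x - 1) * x - 2 * qmean x ^+ 2) / (2 * qmean x) by field.
by rewrite sqr_qmean; field.
Qed.

Lemma xi_gen_sqrt x : 0 < x -> xi_gen Num.sqrt x = - (Num.sqrt x / amean x)^-1.
Proof.
move=> x_gt0; rewrite (xi_gen_is_derive (is_derive1_sqrt x_gt0)) invf_div /amean.
have t_neq0 : Num.sqrt x != 0 by rewrite gt_eqF // sqrtr_gt0.
by have := sqr_sqrtr (ltW x_gt0); move: (Num.sqrt x) t_neq0 => t t_neq0 <-; field.
Qed.

Lemma xi_gen_hmean x : 0 < x -> xi_gen hmean x = - (qmean x / amean x) ^+ 2.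
Proof.
move=> x_gt0; have x1_neq0 : x + 1 != 0 by rewrite gt_eqF // ltr_wpDl // ltW.
rewrite (xi_gen_is_derive (is_derive_hmean x1_neq0)) expr_div_n sqr_qmean.
by rewrite /hmean /amean; field.
Qed.

Lemma chain342_divergences x : 0 < x ->
  chain342 (f_SA x) (f_SH x) (f_Delta x) (f_SG x) (f_h x).
Proof.
move=> x_gt0; have [a_gt0 b_gt0 b_le1 ab] := circle_normalized_means x_gt0.
have k_neq0 : amean x != 0 by rewrite gt_eqF ?amean_gt0.
rewrite f_Delta_means // (f_h_means (ltW x_gt0)) /f_SA /f_SH /f_SG -/(qmean x) -/(hmean x).
rewrite (hmean_sqrt (ltW x_gt0)).
set k := amean x; set s := qmean x; set t := Num.sqrt x.
rewrite (_ : s - k = k * (s / k - 1)); last by field.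
rewrite (_ : s - t ^+ 2 / k = k * (s / k - (t / k) ^+ 2)); last by field.
rewrite (_ : 2 * (k - t ^+ 2 / k) = k * (2 * (1 - (t / k) ^+ 2))); last by field.
rewrite (_ : s - t = k * (s / k - t / k)); last by field.
rewrite (_ : k - t = k * (1 - t / k)); last by field.
exact: chain342_scale (ltW (amean_gt0 x_gt0)) (chain342_circle a_gt0 b_gt0 b_le1 ab).
Qed.

Lemma chain342_xi_gen x : 0 < x ->
  chain342 (xi_gen (@f_SA R) x) (xi_gen (@f_SH R) x) (xi_gen (@f_Delta R) x)
    (xi_gen (@f_SG R) x) (xi_gen (@f_h R) x).
Proof.
move=> x_gt0; have [a_gt0 b_gt0 b_le1 ab] := circle_normalized_means x_gt0.
have x1_neq0 : x + 1 != 0 by rewrite gt_eqF // ltr_wpDl // ltW.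
have dA := is_derive_amean x; have dQ := is_derive_qmean x.
have dG := is_derive1_sqrt x_gt0; have dH := is_derive_hmean x1_neq0.
rewrite -[@f_SA R]/(qmean - amean) -[@f_SH R]/(qmean - hmean) -[@f_SG R]/(qmean - Num.sqrt).
rewrite (eq_xi_gen_pos (g := 2 *: (amean - hmean)) (fun _ => @f_Delta_means _)) //.
rewrite (eq_xi_gen_pos (g := amean - Num.sqrt) (fun _ y_gt0 => f_h_means (ltW y_gt0))) //.
rewrite (xi_genB dQ dA) (xi_genB dQ dH) (xi_genZ _ (is_deriveB dA dH)) (xi_genB dA dH).
rewrite (xi_genB dQ dG) (xi_genB dA dG).
rewrite xi_gen_amean xi_gen_qmean xi_gen_sqrt // xi_gen_hmean //.
rewrite !opprK ![- _ + _]addrC.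
exact: chain342_circle_xi.
Qed.

Lemma ler_Cf_div n f g (c d : R) (P Q : 'I_n -> R) :
  (forall i, 0 < P i) -> (forall i, 0 < Q i) ->
  (forall x, 0 < x -> f x / c <= g x / d) -> Cf f P Q / c <= Cf g P Q / d.
Proof.
move=> P_gt0 Q_gt0 fg; rewrite !mulr_suml; apply: ler_sum => i _; rewrite -!mulrA.
by apply: ler_wpM2l; [exact: ltW | apply/fg/divr_gt0].
Qed.

Lemma chain342_Cf n (f1 f2 f3 f4 f5 : R -> R) (P Q : 'I_n -> R) :
  (forall i, 0 < P i) -> (forall i, 0 < Q i) ->
  (forall x, 0 < x -> chain342 (f1 x) (f2 x) (f3 x) (f4 x) (f5 x)) ->
  chain342 (Cf f1 P Q) (Cf f2 P Q) (Cf f3 P Q) (Cf f4 P Q) (Cf f5 P Q).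
Proof.
move=> P_gt0 Q_gt0 fchain; have le_Cf := ler_Cf_div P_gt0 Q_gt0.
split; [|split; [|split]].
- by rewrite -[Cf f1 P Q]divr1; apply: le_Cf => x /fchain[]; rewrite divr1.
- by apply: le_Cf => x /fchain[_ []].
- by apply: le_Cf => x /fchain[_ [_ []]].
- by rewrite -[Cf f5 P Q]divr1; apply: le_Cf => x /fchain[_ [_ [_]]]; rewrite divr1.
Qed.

End MeanDifferences.

Theorem theorem5p1 (R : realType) (n : nat) (hn : (2 <= n)%N)
  (P Q : 'I_n -> R) (hP : Gamma P) (hQ : Gamma Q) :
  (Cf (@f_SA R) P Q <= Cf (@f_SH R) P Q / 3 /\
   Cf (@f_SH R) P Q / 3 <= Cf (@f_Delta R) P Q / 4 /\
   Cf (@f_Delta R) P Q / 4 <= Cf (@f_SG R) P Q / 2 /\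
   Cf (@f_SG R) P Q / 2 <= Cf (@f_h R) P Q) /\
  (xif (@f_SA R) P Q <= xif (@f_SH R) P Q / 3 /\
   xif (@f_SH R) P Q / 3 <= xif (@f_Delta R) P Q / 4 /\
   xif (@f_Delta R) P Q / 4 <= xif (@f_SG R) P Q / 2 /\
   xif (@f_SG R) P Q / 2 <= xif (@f_h R) P Q).
Proof.
case: hP => P_gt0 _; case: hQ => Q_gt0 _.
have Q_neq0 i : Q i != 0 by rewrite gt_eqF.
rewrite !xif_Cf //; split; apply: chain342_Cf => // x.
- exact: chain342_divergences.
- exact: chain342_xi_gen.
Qed.
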